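(* Let $X$ be a Banach space and $f:X\to\mathbb R\cup\{+\infty\}$ a proper lower semicontinuous convex function with $S=\{x:f(x)\le0\}\ne\emptyset$. Let $K_f$ be the infimum of $K\ge 0$ such that $d(x,S)\le K\,(f(x))^+$ for all $x\in X$ ($K_f=+\infty$ if none). Then $$K_f^{-1}=\inf\Big\{\sup_{\|h\|\le1}\big(-f'(x;h)\big):\ 0<f(x)<\infty\Big\},$$ with conventions $1/0=\infty$, $1/\infty=0$, $\inf\emptyset=+\infty$.
   Context: $f'(x;h)=\lim_{t\downarrow0}t^{-1}(f(x+th)-f(x))\in[-\infty,+\infty]$ is the directional derivative of the convex function $f$ at $x\in\operatorname{dom}f$. *)

From Stdlib Require Import Reals Lra ClassicalEpsilon.
Open Scope R_scope.

Inductive ERbar : Type := Fin (r : R) | PInf | MInf.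

Definition ER_le (a b : ERbar) : Prop :=
  match a, b with
  | MInf, _ => True
  | _, PInf => True
  | Fin x, Fin y => x <= y
  | _, _ => False
  end.

Definition ER_lt (a b : ERbar) : Prop := ER_le a b /\ a <> b.

Definition ER_opp (a : ERbar) : ERbar :=
  match a with Fin x => Fin (- x) | PInf => MInf | MInf => PInf end.

(** inverse on [0,+oo] with 1/0 = +oo, 1/+oo = 0 (only applied to values in [0,+oo]) *)
Definition ER_inv (a : ERbar) : ERbar :=
  match a with
  | Fin x => if Req_EM_T x 0 then PInf else Fin (/ x)
  | PInf => Fin 0
  | MInf => Fin 0
  end.

Definition is_ER_glb (A : ERbar -> Prop) (m : ERbar) : Prop :=
  (forall a, A a -> ER_le m a) /\
  (forall m', (forall a, A a -> ER_le m' a) -> ER_le m' m).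

Definition is_ER_lub (A : ERbar -> Prop) (m : ERbar) : Prop :=
  (forall a, A a -> ER_le a m) /\
  (forall m', (forall a, A a -> ER_le a m') -> ER_le m m').

(** infimum / supremum in [-oo,+oo] (inf of the empty set is +oo) *)
Definition ER_inf (A : ERbar -> Prop) : ERbar :=
  epsilon (inhabits PInf) (is_ER_glb A).
Definition ER_sup (A : ERbar -> Prop) : ERbar :=
  epsilon (inhabits MInf) (is_ER_lub A).

Record BanachSpace : Type := {
  bs_car :> Type;
  bs_zero : bs_car;
  bs_add : bs_car -> bs_car -> bs_car;
  bs_opp : bs_car -> bs_car;
  bs_scal : R -> bs_car -> bs_car;
  bs_norm : bs_car -> R;
  bs_add_assoc : forall x y z, bs_add x (bs_add y z) = bs_add (bs_add x y) z;
  bs_add_comm : forall x y, bs_add x y = bs_add y x;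
  bs_add_zero : forall x, bs_add x bs_zero = x;
  bs_add_opp : forall x, bs_add x (bs_opp x) = bs_zero;
  bs_scal_assoc : forall a b x, bs_scal a (bs_scal b x) = bs_scal (a * b) x;
  bs_scal_one : forall x, bs_scal 1 x = x;
  bs_scal_distr_l : forall a x y, bs_scal a (bs_add x y) = bs_add (bs_scal a x) (bs_scal a y);
  bs_scal_distr_r : forall a b x, bs_scal (a + b) x = bs_add (bs_scal a x) (bs_scal b x);
  bs_norm_eq0 : forall x, bs_norm x = 0 -> x = bs_zero;
  bs_norm_scal : forall a x, bs_norm (bs_scal a x) = Rabs a * bs_norm x;
  bs_norm_triangle : forall x y, bs_norm (bs_add x y) <= bs_norm x + bs_norm y;
  bs_complete : forall u : nat -> bs_car,
    (forall eps, 0 < eps -> exists N, forall m n, (N <= m)%nat -> (N <= n)%nat ->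
        bs_norm (bs_add (u m) (bs_opp (u n))) < eps) ->
    exists l, forall eps, 0 < eps -> exists N, forall n, (N <= n)%nat ->
        bs_norm (bs_add (u n) (bs_opp l)) < eps
}.

Arguments bs_zero {_}.
Arguments bs_add {_}.
Arguments bs_opp {_}.
Arguments bs_scal {_}.
Arguments bs_norm {_}.

Definition bs_sub {X : BanachSpace} (x y : X) : X := bs_add x (bs_opp y).

(** Functions X -> R ∪ {+oo}: [None] stands for +oo. *)
Definition ext (o : option R) : ERbar :=
  match o with Some r => Fin r | None => PInf end.

Definition proper_fun {X : BanachSpace} (f : X -> option R) : Prop :=
  exists x, exists r, f x = Some r.

Definition lsc {X : BanachSpace} (f : X -> option R) : Prop :=
  forall x (t : R), ER_lt (Fin t) (ext (f x)) ->
    exists delta, 0 < delta /\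
      forall y, bs_norm (bs_sub y x) < delta -> ER_lt (Fin t) (ext (f y)).

Definition convex_fun {X : BanachSpace} (f : X -> option R) : Prop :=
  forall x y (fx fy l : R), f x = Some fx -> f y = Some fy -> 0 <= l <= 1 ->
    ER_le (ext (f (bs_add (bs_scal l x) (bs_scal (1 - l) y))))
          (Fin (l * fx + (1 - l) * fy)).

Definition is_right_lim0 (q : R -> ERbar) (l : ERbar) : Prop :=
  match l with
  | Fin L => forall eps, 0 < eps -> exists delta, 0 < delta /\
       forall t, 0 < t < delta -> exists v, q t = Fin v /\ Rabs (v - L) < eps
  | PInf => forall M, exists delta, 0 < delta /\
       forall t, 0 < t < delta -> ER_lt (Fin M) (q t)
  | MInf => forall M, exists delta, 0 < delta /\
       forall t, 0 < t < delta -> ER_lt (q t) (Fin M)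
  end.

Definition diff_quot {X : BanachSpace} (f : X -> option R) (x h : X) (fx t : R) : ERbar :=
  match f (bs_add x (bs_scal t h)) with
  | Some v => Fin ((v - fx) / t)
  | None => PInf
  end.

(** directional derivative f'(x;h) = lim_{t↓0} (f(x+th)-f(x))/t for x ∈ dom f
    (value irrelevant outside dom f) *)
Definition dir_deriv {X : BanachSpace} (f : X -> option R) (x h : X) : ERbar :=
  match f x with
  | Some fx => epsilon (inhabits PInf) (is_right_lim0 (diff_quot f x h fx))
  | None => PInf
  end.

Definition sublevel0 {X : BanachSpace} (f : X -> option R) (x : X) : Prop :=
  exists r, f x = Some r /\ r <= 0.

Definition dist_set {X : BanachSpace} (S : X -> Prop) (x : X) : ERbar :=
  ER_inf (fun v => exists s, S s /\ v = Fin (bs_norm (bs_sub x s))).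

(** d(x,S) <= K (f x)^+ for all x (with K * (+oo) = +oo) *)
Definition error_bound_const {X : BanachSpace} (f : X -> option R) (K : R) : Prop :=
  0 <= K /\
  forall x, match f x with
            | Some v => ER_le (dist_set (sublevel0 f) x) (Fin (K * Rmax v 0))
            | None => True
            end.

Definition K_f {X : BanachSpace} (f : X -> option R) : ERbar :=
  ER_inf (fun k => exists K, k = Fin K /\ error_bound_const f K).

Definition slope_inf {X : BanachSpace} (f : X -> option R) : ERbar :=
  ER_inf (fun v => exists x r, f x = Some r /\ 0 < r /\
     v = ER_sup (fun w => exists h : X, bs_norm h <= 1 /\ w = ER_opp (dir_deriv f x h))).

From Stdlib Require Import Reals Lra Lia ClassicalEpsilon Classical.
Open Scope R_scope.

(* For [0 < f x] and [s] with [f s <= 0], the difference quotient of [f] from [x] towards [s]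
   is at most [- f x / |s - x|], and by convexity it dominates [f'(x; (s - x)/|s - x|)]; hence
   the slope [sup_{|h| <= 1} - f'(x;h)] is at least [f x / d(x,S)], which gives
   [1/K_f <= inf slope].  Conversely, if the slope is [>= mu] wherever [0 < f < +oo], apply
   Ekeland's variational principle to [f^+] with any constant [mu' < mu], starting at [x]:
   the Ekeland point [z] satisfies [mu' |z - x| <= f x], and [f z > 0] is impossible because
   a descent direction of slope [> mu'] would decrease [f^+ + mu' |. - z|] below its value at
   [z].  So [d(x,S) <= f x / mu'] for all [mu' < mu], i.e. [K_f <= 1/mu]. *)

Lemma ER_le_refl a : ER_le a a.
Proof. destruct a; simpl; auto; lra. Qed.

Lemma ER_le_trans a b c : ER_le a b -> ER_le b c -> ER_le a c.
Proof. destruct a, b, c; simpl; auto; try tauto; lra. Qed.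

Lemma ER_le_antisym a b : ER_le a b -> ER_le b a -> a = b.
Proof. destruct a, b; simpl; try tauto; intros; f_equal; lra. Qed.

Lemma ER_le_total a b : ER_le a b \/ ER_le b a.
Proof. destruct a, b; simpl; auto; lra. Qed.

Lemma ER_le_PInf a : ER_le a PInf.
Proof. destruct a; simpl; auto. Qed.

Lemma ER_lt_nle a b : ER_lt a b <-> ~ ER_le b a.
Proof.
  split.
  - intros [Hab Hne] Hba. exact (Hne (ER_le_antisym a b Hab Hba)).
  - intros Hba. destruct (ER_le_total a b) as [Hab|]; [|tauto].
    split; [exact Hab|]. intros ->. exact (Hba (ER_le_refl b)).
Qed.

Lemma ER_lt_Fin s t : ER_lt (Fin s) (Fin t) <-> s < t.
Proof. rewrite ER_lt_nle; simpl; split; intros; lra. Qed.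

Lemma ER_lt_Fin_ext t o :
  ER_lt (Fin t) (ext o) <-> match o with Some v => t < v | None => True end.
Proof. destruct o; simpl; [apply ER_lt_Fin|]. rewrite ER_lt_nle; simpl; tauto. Qed.

Lemma ER_opp_le a b : ER_le a b -> ER_le (ER_opp b) (ER_opp a).
Proof. destruct a, b; simpl; auto; lra. Qed.

Lemma ER_opp_involutive a : ER_opp (ER_opp a) = a.
Proof. destruct a; simpl; auto. f_equal; ring. Qed.

Lemma ER_lt_opp_Fin s a : ER_lt (Fin s) (ER_opp a) -> ER_lt a (Fin (- s)).
Proof.
  rewrite !ER_lt_nle. intros H Hle. apply H.
  rewrite <- (ER_opp_involutive (Fin s)). now apply ER_opp_le.
Qed.

Lemma ER_lub_exists (A : ERbar -> Prop) : exists m, is_ER_lub A m.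
Proof.
  destruct (classic (A PInf)) as [HP|HP].
  { exists PInf; split; [intros; apply ER_le_PInf|].
    intros m' Hm. specialize (Hm _ HP). destruct m'; simpl in *; tauto. }
  destruct (classic (exists r, A (Fin r))) as [[r0 Hr0]|Hnone].
  - destruct (classic (exists M, forall r, A (Fin r) -> r <= M)) as [[M HM]|Hunb].
    + destruct (completeness (fun r => A (Fin r))) as [l [Hl1 Hl2]].
      { exists M; intros r Hr; apply HM; auto. }
      { exists r0; auto. }
      exists (Fin l); split.
      * intros [r| |] Ha; simpl; auto; tauto.
      * intros [y| |] Hy; simpl; auto.
        -- apply Hl2. intros r Hr. apply (Hy _ Hr).
        -- apply (Hy _ Hr0).
    + exists PInf; split; [intros; apply ER_le_PInf|].
      intros [y| |] Hy; simpl; auto.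
      * apply Hunb; exists y; intros r Hr; apply (Hy _ Hr).
      * apply (Hy _ Hr0).
  - exists MInf; split.
    + intros [r| |] Ha; simpl; auto. apply Hnone; eauto.
    + intros; simpl; auto.
Qed.

Lemma ER_glb_exists (A : ERbar -> Prop) : exists m, is_ER_glb A m.
Proof.
  destruct (ER_lub_exists (fun a => A (ER_opp a))) as [m [Hub Hleast]].
  exists (ER_opp m); split.
  - intros a Ha. rewrite <- (ER_opp_involutive a) in Ha.
    rewrite <- (ER_opp_involutive a). apply ER_opp_le, Hub, Ha.
  - intros m' Hm'. rewrite <- (ER_opp_involutive m').
    apply ER_opp_le, Hleast. intros a Ha.
    rewrite <- (ER_opp_involutive a). apply ER_opp_le, Hm', Ha.
Qed.

Lemma ER_sup_spec A : is_ER_lub A (ER_sup A).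
Proof. unfold ER_sup. apply epsilon_spec, ER_lub_exists. Qed.

Lemma ER_inf_spec A : is_ER_glb A (ER_inf A).
Proof. unfold ER_inf. apply epsilon_spec, ER_glb_exists. Qed.

Lemma ER_lt_sup A a : ER_lt a (ER_sup A) -> exists w, A w /\ ER_lt a w.
Proof.
  intros Hlt. apply NNPP; intros Hno. apply ER_lt_nle in Hlt. apply Hlt, ER_sup_spec.
  intros w Hw. apply NNPP; intros Hwa. apply Hno. exists w. split; [exact Hw|].
  now apply ER_lt_nle.
Qed.

Lemma ER_inf_lt A a : ER_lt (ER_inf A) a -> exists w, A w /\ ER_lt w a.
Proof.
  intros Hlt. apply NNPP; intros Hno. apply ER_lt_nle in Hlt. apply Hlt, ER_inf_spec.
  intros w Hw. apply NNPP; intros Hwa. apply Hno. exists w. split; [exact Hw|].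
  now apply ER_lt_nle.
Qed.

Lemma ER_le_Fin_eps d c : (forall e, 0 < e -> ER_le d (Fin (c + e))) -> ER_le d (Fin c).
Proof.
  intros H. destruct d as [x| |]; simpl; auto.
  - apply Rle_plus_epsilon. intros e He. exact (H e He).
  - apply (H 1). lra.
Qed.

Lemma ER_le_of_pos_lower_bounds a b :
  ER_le (Fin 0) a -> (forall mu, 0 < mu -> ER_le (Fin mu) b -> ER_le (Fin mu) a) ->
  ER_le b a.
Proof.
  intros Ha0 Hb. destruct b as [m| |].
  - destruct (Rle_lt_dec m 0) as [Hm|Hm].
    + apply ER_le_trans with (Fin 0); [simpl; lra | exact Ha0].
    + apply Hb; simpl; auto; lra.
  - destruct a as [x| |]; simpl in *; auto.
    assert (H : x + 1 <= x) by (apply (Hb (x + 1)); simpl; auto; lra). lra.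
  - exact I.
Qed.

Lemma ER_inv_nonneg k : ER_le (Fin 0) k -> ER_le (Fin 0) (ER_inv k).
Proof.
  destruct k as [x| |]; simpl; try lra; auto.
  intros Hx. destruct (Req_EM_T x 0); simpl; auto.
  left. apply Rinv_0_lt_compat. lra.
Qed.

Lemma ER_inv_le_Fin s k : 0 < s -> ER_le (Fin (/ s)) k -> ER_le (ER_inv k) (Fin s).
Proof.
  intros Hs. destruct k as [x| |]; simpl; [|lra|tauto].
  intros Hx. assert (0 < / s) by (apply Rinv_0_lt_compat; lra).
  destruct (Req_EM_T x 0); [lra|]. simpl.
  rewrite <- (Rinv_inv s). apply Rinv_le_contravar; lra.
Qed.

Lemma ER_Fin_le_inv s k :
  0 < s -> ER_le (Fin 0) k -> ER_le k (Fin (/ s)) -> ER_le (Fin s) (ER_inv k).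
Proof.
  intros Hs. destruct k as [x| |]; simpl; try tauto.
  intros Hx0 Hx. destruct (Req_EM_T x 0); simpl; auto.
  rewrite <- (Rinv_inv s). apply Rinv_le_contravar; lra.
Qed.

Section NormedSpace.
Context {X : BanachSpace}.
Implicit Types x y z : X.

Lemma bs_add_0_l x : bs_add bs_zero x = x.
Proof. rewrite bs_add_comm; apply bs_add_zero. Qed.

Lemma bs_add_reg_l x y z : bs_add x y = bs_add x z -> y = z.
Proof.
  intros H.
  rewrite <- (bs_add_0_l y), <- (bs_add_0_l z), <- (bs_add_opp _ x), (bs_add_comm _ x (bs_opp x)),
    <- !bs_add_assoc, H. reflexivity.
Qed.

Lemma bs_scal_0_l x : bs_scal 0 x = bs_zero.
Proof.
  apply (bs_add_reg_l (bs_scal 0 x)). rewrite <- bs_scal_distr_r, Rplus_0_r, bs_add_zero.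
  reflexivity.
Qed.

Lemma bs_opp_scal x : bs_opp x = bs_scal (-1) x.
Proof.
  apply (bs_add_reg_l x). rewrite bs_add_opp. rewrite <- (bs_scal_one _ x) at 1.
  rewrite <- bs_scal_distr_r, Rplus_opp_r, bs_scal_0_l. reflexivity.
Qed.

Lemma bs_norm_zero : bs_norm (@bs_zero X) = 0.
Proof. rewrite <- (bs_scal_0_l bs_zero), bs_norm_scal, Rabs_R0. ring. Qed.

Lemma bs_norm_opp x : bs_norm (bs_opp x) = bs_norm x.
Proof. rewrite bs_opp_scal, bs_norm_scal, Rabs_left by lra. ring. Qed.

Lemma bs_norm_nonneg x : 0 <= bs_norm x.
Proof.
  pose proof (bs_norm_triangle _ x (bs_opp x)) as H.
  rewrite bs_add_opp, bs_norm_zero, bs_norm_opp in H. lra.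
Qed.

Lemma bs_norm_sub_diag x : bs_norm (bs_sub x x) = 0.
Proof. unfold bs_sub. rewrite bs_add_opp. apply bs_norm_zero. Qed.

Lemma bs_norm_sub_eq0 x y : bs_norm (bs_sub x y) = 0 -> x = y.
Proof.
  intros H. apply bs_norm_eq0 in H. apply (bs_add_reg_l (bs_opp y)).
  rewrite bs_add_comm, (bs_add_comm _ _ y), bs_add_opp. exact H.
Qed.

Lemma bs_norm_sub_sym x y : bs_norm (bs_sub x y) = bs_norm (bs_sub y x).
Proof.
  rewrite <- bs_norm_opp. unfold bs_sub. rewrite !bs_opp_scal, bs_scal_distr_l, bs_scal_assoc.
  replace (-1 * -1) with 1 by ring. rewrite bs_scal_one, bs_add_comm. reflexivity.
Qed.

Lemma bs_norm_sub_triangle x y z :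
  bs_norm (bs_sub x z) <= bs_norm (bs_sub x y) + bs_norm (bs_sub y z).
Proof.
  replace (bs_sub x z) with (bs_add (bs_sub x y) (bs_sub y z)); [apply bs_norm_triangle|].
  unfold bs_sub. rewrite bs_add_assoc, <- (bs_add_assoc _ x), (bs_add_comm _ (bs_opp y)),
    bs_add_opp, bs_add_zero. reflexivity.
Qed.

Lemma bs_add_sub_l x y : bs_sub (bs_add x y) x = y.
Proof.
  unfold bs_sub. rewrite (bs_add_comm _ x), <- bs_add_assoc, bs_add_opp, bs_add_zero.
  reflexivity.
Qed.

Lemma bs_add_sub_cancel x y : bs_add x (bs_sub y x) = y.
Proof.
  unfold bs_sub. rewrite bs_add_assoc, (bs_add_comm _ x y), <- bs_add_assoc, bs_add_opp,
    bs_add_zero. reflexivity.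
Qed.

Lemma bs_convex_comb_ray x h l t :
  bs_add (bs_scal l (bs_add x (bs_scal t h))) (bs_scal (1 - l) x) = bs_add x (bs_scal (l * t) h).
Proof.
  rewrite bs_scal_distr_l, bs_scal_assoc, <- bs_add_assoc, (bs_add_comm _ (bs_scal (l * t) h)),
    bs_add_assoc, <- bs_scal_distr_r.
  replace (l + (1 - l)) with 1 by ring. rewrite bs_scal_one. reflexivity.
Qed.

End NormedSpace.

Lemma diff_quot_not_MInf {X : BanachSpace} (f : X -> option R) x h fx t :
  diff_quot f x h fx t <> MInf.
Proof. unfold diff_quot; destruct (f _); discriminate. Qed.

Lemma diff_quot_mono {X : BanachSpace} (f : X -> option R) x h fx s t :
  convex_fun f -> f x = Some fx -> 0 < s -> s <= t ->
  ER_le (diff_quot f x h fx s) (diff_quot f x h fx t).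
Proof.
  intros Hconv Hx Hs Hst. unfold diff_quot at 2.
  destruct (f (bs_add x (bs_scal t h))) as [vt|] eqn:Et; [|apply ER_le_PInf].
  set (l := s / t).
  assert (Hlt : l * t = s) by (unfold l; field; lra).
  assert (Hl : 0 <= l <= 1) by (split; nra).
  pose proof (Hconv _ _ _ _ l Et Hx Hl) as Hc.
  rewrite bs_convex_comb_ray, Hlt in Hc. unfold diff_quot.
  destruct (f (bs_add x (bs_scal s h))) as [vs|]; simpl in Hc |- *; [|tauto].
  apply Rle_trans with (l * (vt - fx) / s).
  - unfold Rdiv. apply Rmult_le_compat_r; [left; apply Rinv_0_lt_compat|]; lra.
  - right. unfold l. field. lra.
Qed.

Section MonotoneRightLimit.
Variable q : R -> ERbar.
Hypothesis q_mono : forall s t, 0 < s -> s <= t -> ER_le (q s) (q t).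

(* The limit is the infimum of [q] over [t > 0]. *)
Lemma right_lim0_exists : exists l, is_right_lim0 q l.
Proof.
  set (A := fun v => exists t, 0 < t /\ v = q t).
  assert (Hlow : forall t, 0 < t -> ER_le (ER_inf A) (q t))
    by (intros t Ht; apply ER_inf_spec; exists t; auto).
  assert (Hbelow : forall a, ER_lt (ER_inf A) (Fin a) ->
            exists t0, 0 < t0 /\ forall t, 0 < t < t0 -> ER_lt (q t) (Fin a)).
  { intros a Ha. destruct (ER_inf_lt _ _ Ha) as [w [[t0 [Ht0 ->]] Hw]].
    exists t0. split; [exact Ht0|]. intros t Ht. rewrite ER_lt_nle in Hw |- *.
    intros Hle. apply Hw, (ER_le_trans _ _ _ Hle), q_mono; lra. }
  exists (ER_inf A). destruct (ER_inf A) as [l| |] eqn:El; simpl.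
  - intros eps Heps.
    destruct (Hbelow (l + eps)) as [t0 [Ht0 Hq]]; [apply ER_lt_Fin; lra|].
    exists t0. split; [exact Ht0|]. intros t Ht.
    specialize (Hq t Ht). specialize (Hlow t (proj1 Ht)).
    destruct (q t) as [v| |]; simpl in Hlow; [|rewrite ER_lt_nle in Hq; simpl in Hq; tauto|tauto].
    apply ER_lt_Fin in Hq. exists v. split; [reflexivity|]. apply Rabs_def1; lra.
  - intros M. exists 1. split; [lra|]. intros t Ht.
    specialize (Hlow t (proj1 Ht)). destruct (q t); simpl in Hlow; try tauto.
    apply ER_lt_nle. simpl. tauto.
  - intros M. apply Hbelow. rewrite ER_lt_nle. simpl. tauto.
Qed.

Hypothesis q_not_MInf : forall t, q t <> MInf.

Lemma right_lim0_le l t : is_right_lim0 q l -> 0 < t -> ER_le l (q t).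
Proof.
  intros Hl Ht. apply NNPP. rewrite <- ER_lt_nle. intros Hlt.
  destruct (q t) as [v| |] eqn:Eq; [| rewrite ER_lt_nle in Hlt; apply Hlt, ER_le_PInf
                                     | exact (q_not_MInf t Eq)].
  assert (Hnear : forall d, 0 < d -> exists s, 0 < s < d /\ ER_le (q s) (Fin v)).
  { intros d Hd. exists (Rmin t (d / 2)). rewrite <- Eq.
    split; [split; [apply Rmin_glb_lt|]|apply q_mono]; try lra.
    - eapply Rle_lt_trans; [apply Rmin_r|lra].
    - apply Rmin_glb_lt; lra.
    - apply Rmin_l. }
  destruct l as [L| |]; simpl in Hl.
  - apply ER_lt_Fin in Hlt.
    destruct (Hl (L - v)) as [d [Hd Hq]]; [lra|].
    destruct (Hnear d Hd) as [s [Hs Hsv]]. destruct (Hq s Hs) as [w [Hw Hwl]].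
    rewrite Hw in Hsv. simpl in Hsv. apply Rabs_def2 in Hwl. lra.
  - destruct (Hl v) as [d [Hd Hq]].
    destruct (Hnear d Hd) as [s [Hs Hsv]]. specialize (Hq s Hs).
    rewrite ER_lt_nle in Hq. tauto.
  - rewrite ER_lt_nle in Hlt. apply Hlt. simpl. exact I.
Qed.

End MonotoneRightLimit.

Lemma right_lim0_lt (q : R -> ERbar) l a :
  is_right_lim0 q l -> ER_lt l (Fin a) ->
  exists d, 0 < d /\ forall t, 0 < t < d -> ER_lt (q t) (Fin a).
Proof.
  intros Hl Hla. destruct l as [L| |]; simpl in Hl.
  - apply ER_lt_Fin in Hla.
    destruct (Hl (a - L)) as [d [Hd Hq]]; [lra|]. exists d. split; [exact Hd|].
    intros t Ht. destruct (Hq t Ht) as [w [-> Hw]]. apply ER_lt_Fin.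
    apply Rabs_def2 in Hw. lra.
  - rewrite ER_lt_nle in Hla. simpl in Hla. tauto.
  - apply Hl.
Qed.

Lemma dir_deriv_spec {X : BanachSpace} (f : X -> option R) x h fx :
  convex_fun f -> f x = Some fx ->
  is_right_lim0 (diff_quot f x h fx) (dir_deriv f x h) /\
  (forall t, 0 < t -> ER_le (dir_deriv f x h) (diff_quot f x h fx t)).
Proof.
  intros Hconv Hx.
  assert (Hmono : forall s t, 0 < s -> s <= t ->
            ER_le (diff_quot f x h fx s) (diff_quot f x h fx t))
    by (intros; apply diff_quot_mono; auto).
  assert (Hlim : is_right_lim0 (diff_quot f x h fx) (dir_deriv f x h)).
  { unfold dir_deriv. rewrite Hx. apply epsilon_spec, right_lim0_exists, Hmono. }
  split; [exact Hlim|]. intros t Ht.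
  apply right_lim0_le; auto. intros; apply diff_quot_not_MInf.
Qed.

Lemma le_0_of_le_inv_INR c : (forall n, c <= / INR (S n)) -> c <= 0.
Proof.
  intros H. apply Rnot_lt_le. intros Hc.
  destruct (archimed_cor1 c Hc) as [[|n] [HN HN0]]; [lia|]. specialize (H n). lra.
Qed.

Section Ekeland.
Context {X : BanachSpace}.
Variables (g : X -> option R) (mu : R).
Hypotheses (mu_pos : 0 < mu) (g_nonneg : forall y b, g y = Some b -> 0 <= b) (g_lsc : lsc g).

Lemma mu_norm_sub_triangle (x y z : X) :
  mu * bs_norm (bs_sub x z) <= mu * bs_norm (bs_sub x y) + mu * bs_norm (bs_sub y z).
Proof.
  rewrite <- Rmult_plus_distr_l. apply Rmult_le_compat_l; [lra|apply bs_norm_sub_triangle].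
Qed.

Definition ekeland_region (x : X) (a : R) (y : X) : Prop :=
  exists b, g y = Some b /\ b + mu * bs_norm (bs_sub y x) <= a.

Lemma ekeland_region_center x a : g x = Some a -> ekeland_region x a x.
Proof. intros Hx. exists a. rewrite bs_norm_sub_diag. split; [exact Hx|lra]. Qed.

Lemma ekeland_region_closed x a (u : nat -> X) z :
  (forall k, ekeland_region x a (u k)) ->
  (forall eps, 0 < eps -> exists N, forall k, (N <= k)%nat -> bs_norm (bs_sub (u k) z) < eps) ->
  ekeland_region x a z.
Proof.
  intros Hu Hlim. apply NNPP; intros Hz.
  set (c := a - mu * bs_norm (bs_sub z x)).
  assert (Habove : exists t, c < t /\ ER_lt (Fin t) (ext (g z))).
  { destruct (g z) as [gz|] eqn:Egz.
    - assert (c < gz).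
      { apply Rnot_le_lt. intros Hle. apply Hz. exists gz.
        unfold c in Hle. split; [exact Egz|lra]. }
      exists ((c + gz) / 2). split; [lra|]. apply ER_lt_Fin. lra.
    - exists (c + 1). split; [lra|]. apply ER_lt_Fin_ext. exact I. }
  destruct Habove as [t [Hct Ht]].
  destruct (g_lsc z t Ht) as [d [Hd Hnear]].
  destruct (Hlim (Rmin d ((t - c) / mu))) as [N HN].
  { apply Rmin_glb_lt; [exact Hd|]. apply Rdiv_lt_0_compat; lra. }
  specialize (HN N (Nat.le_refl N)).
  destruct (Hu N) as [b [Hb Hbx]].
  specialize (Hnear (u N) (Rlt_le_trans _ _ _ HN (Rmin_l _ _))).
  rewrite Hb in Hnear. apply ER_lt_Fin in Hnear.
  assert (Hclose : mu * bs_norm (bs_sub (u N) z) < t - c).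
  { apply Rlt_le_trans with (mu * ((t - c) / mu)); [|right; field; lra].
    apply Rmult_lt_compat_l; [exact mu_pos|]. eapply Rlt_le_trans; [exact HN|apply Rmin_r]. }
  pose proof (mu_norm_sub_triangle z (u N) x) as Htri.
  rewrite (bs_norm_sub_sym z (u N)) in Htri. unfold c in *. lra.
Qed.

Lemma ekeland_near_min x a eps :
  g x = Some a -> 0 < eps ->
  exists y b, g y = Some b /\ b + mu * bs_norm (bs_sub y x) <= a /\
    forall y' b', g y' = Some b' -> b' + mu * bs_norm (bs_sub y' x) <= a -> b <= b' + eps.
Proof.
  intros Hx Heps.
  set (E := fun c => exists y b, g y = Some b /\ b + mu * bs_norm (bs_sub y x) <= a /\ c = - b).
  destruct (completeness E) as [m [Hub Hleast]].
  { exists 0. intros c (y & b & Hb & _ & ->). apply g_nonneg in Hb. lra. }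
  { exists (- a), x, a. rewrite bs_norm_sub_diag. repeat split; auto; lra. }
  apply NNPP; intros Hno.
  assert (m <= m - eps); [|lra]. apply Hleast.
  intros c (y & b & Hb & Hyx & ->). apply Rnot_lt_le. intros Hlt. apply Hno.
  exists y, b. repeat split; auto. intros y' b' Hb' Hy'x.
  assert (- b' <= m) by (apply Hub; exists y', b'; auto). lra.
Qed.

(* [p'] nearly minimizes [g] over the region of [p], up to [1/(n+1)].  The step is guarded by
   [g (fst p) = Some (snd p)] so that it always has a witness for [epsilon] to pick. *)
Definition ekeland_step (n : nat) (p p' : X * R) : Prop :=
  g (fst p) = Some (snd p) ->
  g (fst p') = Some (snd p') /\ snd p' + mu * bs_norm (bs_sub (fst p') (fst p)) <= snd p /\
  forall y b, g y = Some b -> b + mu * bs_norm (bs_sub y (fst p)) <= snd p ->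
    snd p' <= b + / INR (S n).

Variables (x0 : X) (r0 : R).

Fixpoint ekeland_seq (n : nat) : X * R :=
  match n with
  | O => (x0, r0)
  | S k => epsilon (inhabits (x0, r0)) (ekeland_step k (ekeland_seq k))
  end.

Hypothesis g_x0 : g x0 = Some r0.

Let pt n := fst (ekeland_seq n).
Let val n := snd (ekeland_seq n).

Lemma ekeland_seq_step n : ekeland_step n (ekeland_seq n) (ekeland_seq (S n)).
Proof.
  simpl. apply epsilon_spec. destruct (ekeland_seq n) as [x a].
  destruct (classic (g x = Some a)) as [Hx|Hx].
  - destruct (ekeland_near_min x a (/ INR (S n)) Hx) as (y & b & Hy & Hyx & Hmin).
    { apply Rinv_0_lt_compat, lt_0_INR. lia. }
    exists (y, b). intros _. auto.
  - exists (x, a). intros H. contradiction.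
Qed.

Lemma ekeland_seq_dom n : g (pt n) = Some (val n).
Proof. induction n as [|n IHn]; [exact g_x0|]. apply (ekeland_seq_step n IHn). Qed.

Lemma ekeland_region_succ n y :
  ekeland_region (pt (S n)) (val (S n)) y -> ekeland_region (pt n) (val n) y.
Proof.
  intros [b [Hb Hy]]. exists b. split; [exact Hb|].
  destruct (ekeland_seq_step n (ekeland_seq_dom n)) as (_ & Hstep & _).
  pose proof (mu_norm_sub_triangle y (pt (S n)) (pt n)). unfold pt, val in *. lra.
Qed.

Lemma ekeland_region_antitone n m y :
  (n <= m)%nat -> ekeland_region (pt m) (val m) y -> ekeland_region (pt n) (val n) y.
Proof. induction 1; auto using ekeland_region_succ. Qed.

Lemma ekeland_region_radius n y :
  ekeland_region (pt (S n)) (val (S n)) y -> mu * bs_norm (bs_sub y (pt (S n))) <= / INR (S n).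
Proof.
  intros Hy. destruct (ekeland_region_succ n y Hy) as [b [Hb Hyn]].
  destruct Hy as [b' [Hb' Hy]]. rewrite Hb in Hb'. injection Hb' as <-.
  destruct (ekeland_seq_step n (ekeland_seq_dom n)) as (_ & _ & Hmin).
  specialize (Hmin y b Hb Hyn). unfold pt, val in *. lra.
Qed.

Lemma ekeland_seq_close n m :
  (S n <= m)%nat -> mu * bs_norm (bs_sub (pt m) (pt (S n))) <= / INR (S n).
Proof.
  intros Hnm. apply ekeland_region_radius, (ekeland_region_antitone _ m _ Hnm).
  apply ekeland_region_center, ekeland_seq_dom.
Qed.

Lemma ekeland_seq_cauchy eps : 0 < eps ->
  exists N, forall m k, (N <= m)%nat -> (N <= k)%nat -> bs_norm (bs_sub (pt m) (pt k)) < eps.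
Proof.
  intros Heps. destruct (archimed_cor1 (eps * mu / 2)) as [[|n] [HN HN0]]; [nra|lia|].
  exists (S n). intros m k Hm Hk.
  pose proof (ekeland_seq_close n m Hm). pose proof (ekeland_seq_close n k Hk).
  pose proof (mu_norm_sub_triangle (pt m) (pt (S n)) (pt k)).
  rewrite (bs_norm_sub_sym (pt (S n)) (pt k)) in *.
  apply (Rmult_lt_reg_l mu); lra.
Qed.

Theorem ekeland_variational_principle :
  exists z c, g z = Some c /\ c + mu * bs_norm (bs_sub z x0) <= r0 /\
    forall y b, g y = Some b -> b + mu * bs_norm (bs_sub y z) <= c -> y = z.
Proof.
  destruct (bs_complete _ pt ekeland_seq_cauchy) as [z Hz].
  assert (Hzin : forall n, ekeland_region (pt n) (val n) z).
  { intros n. apply (ekeland_region_closed _ _ (fun k => pt (k + n)%nat) z).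
    - intros k. apply (ekeland_region_antitone n (k + n)); [lia|].
      apply ekeland_region_center, ekeland_seq_dom.
    - intros eps Heps. destruct (Hz eps Heps) as [N HN]. exists N. intros k Hk. apply HN. lia. }
  destruct (Hzin O) as [c [Hc Hcz]].
  exists z, c. split; [exact Hc|]. split; [exact Hcz|].
  intros y b Hy Hyz.
  apply bs_norm_sub_eq0, Rle_antisym; [|apply bs_norm_nonneg].
  apply (Rmult_le_reg_l (mu / 2)); [lra|]. rewrite Rmult_0_r. apply le_0_of_le_inv_INR. intros n.
  assert (Hyn : ekeland_region (pt (S n)) (val (S n)) y).
  { destruct (Hzin (S n)) as [c' [Hc' Hzn]]. rewrite Hc in Hc'. injection Hc' as <-.
    exists b. split; [exact Hy|]. pose proof (mu_norm_sub_triangle y z (pt (S n))). lra. }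
  pose proof (ekeland_region_radius n y Hyn). pose proof (ekeland_region_radius n z (Hzin (S n))).
  pose proof (mu_norm_sub_triangle y (pt (S n)) z).
  rewrite (bs_norm_sub_sym (pt (S n)) z) in *. lra.
Qed.

End Ekeland.

Definition slope {X : BanachSpace} (f : X -> option R) (x : X) : ERbar :=
  ER_sup (fun w => exists h : X, bs_norm h <= 1 /\ w = ER_opp (dir_deriv f x h)).

Section Slope.
Context {X : BanachSpace} (f : X -> option R).
Hypothesis f_convex : convex_fun f.

Lemma dist_set_le (S : X -> Prop) x s : S s -> ER_le (dist_set S x) (Fin (bs_norm (bs_sub x s))).
Proof. intros Hs. apply ER_inf_spec. exists s. auto. Qed.

Lemma dist_set_ge (S : X -> Prop) x c :
  (forall s, S s -> c <= bs_norm (bs_sub x s)) -> ER_le (Fin c) (dist_set S x).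
Proof. intros H. apply ER_inf_spec. intros v (s & Hs & ->). exact (H s Hs). Qed.

Lemma K_f_nonneg : ER_le (Fin 0) (K_f f).
Proof. apply ER_inf_spec. intros k (K & -> & HK0 & _). exact HK0. Qed.

Lemma slope_ge_ratio x r s fs :
  f x = Some r -> 0 < r -> f s = Some fs -> fs <= 0 ->
  0 < bs_norm (bs_sub s x) /\ ER_le (Fin (r / bs_norm (bs_sub s x))) (slope f x).
Proof.
  intros Hx Hr Hs Hfs. set (t := bs_norm (bs_sub s x)).
  assert (Ht : 0 < t).
  { destruct (bs_norm_nonneg (bs_sub s x)) as [Hpos|Ht0]; [exact Hpos|].
    symmetry in Ht0. apply bs_norm_sub_eq0 in Ht0. subst s. rewrite Hx in Hs.
    injection Hs. lra. }
  split; [exact Ht|].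
  set (h := bs_scal (/ t) (bs_sub s x)).
  assert (Hh : bs_norm h <= 1).
  { unfold h. rewrite bs_norm_scal, Rabs_pos_eq by (left; apply Rinv_0_lt_compat; lra).
    fold t. rewrite Rinv_l by lra. lra. }
  assert (Hxt : bs_add x (bs_scal t h) = s).
  { unfold h. rewrite bs_scal_assoc, Rinv_r, bs_scal_one by lra. apply bs_add_sub_cancel. }
  destruct (dir_deriv_spec f x h r f_convex Hx) as [_ Hle].
  specialize (Hle t Ht). unfold diff_quot in Hle. rewrite Hxt, Hs in Hle.
  apply ER_le_trans with (ER_opp (dir_deriv f x h)).
  - apply ER_le_trans with (ER_opp (Fin ((fs - r) / t))); [|apply ER_opp_le, Hle].
    simpl. apply Rle_trans with ((r - fs) / t); [|right; field; lra].
    unfold Rdiv. apply Rmult_le_compat_r; [left; apply Rinv_0_lt_compat|]; lra.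
  - apply ER_sup_spec. exists h. auto.
Qed.

Lemma inv_K_f_le_slope x r :
  (exists s, sublevel0 f s) -> f x = Some r -> 0 < r -> ER_le (ER_inv (K_f f)) (slope f x).
Proof.
  intros [s0 (fs0 & Hs0 & Hfs0)] Hx Hr.
  destruct (slope_ge_ratio x r s0 fs0 Hx Hr Hs0 Hfs0) as [Ht0 Hratio0].
  destruct (slope f x) as [sg| |] eqn:Eslope; [|apply ER_le_PInf|contradiction].
  simpl in Hratio0.
  assert (Hsg : 0 < sg).
  { eapply Rlt_le_trans; [|exact Hratio0]. apply Rdiv_lt_0_compat; lra. }
  apply ER_inv_le_Fin; [exact Hsg|]. apply ER_inf_spec. intros k (K & -> & HK0 & HK).
  specialize (HK x). rewrite Hx, Rmax_left in HK by lra.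
  assert (Hdist : ER_le (Fin (r / sg)) (dist_set (sublevel0 f) x)).
  { apply dist_set_ge. intros s (fs & Hs & Hfs).
    destruct (slope_ge_ratio x r s fs Hx Hr Hs Hfs) as [Ht Hratio].
    rewrite Eslope in Hratio. simpl in Hratio. rewrite bs_norm_sub_sym.
    assert (r / bs_norm (bs_sub s x) * bs_norm (bs_sub s x) = r) by (field; lra).
    assert (r / sg * sg = r) by (field; lra). nra. }
  pose proof (ER_le_trans _ _ _ Hdist HK) as Hle. simpl in Hle |- *.
  assert (r / sg = / sg * r) by (field; lra). nra.
Qed.

Definition pos_part (y : X) : option R :=
  match f y with Some v => Some (Rmax v 0) | None => None end.

Lemma pos_part_nonneg y b : pos_part y = Some b -> 0 <= b.
Proof.
  unfold pos_part. destruct (f y); intros H; [injection H as <-; apply Rmax_r|discriminate].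
Qed.

Lemma pos_part_lsc : lsc f -> lsc pos_part.
Proof.
  intros Hlsc x t Ht. unfold pos_part in *. destruct (Rlt_le_dec t 0) as [Hneg|Hnn].
  - exists 1. split; [lra|]. intros y _. apply ER_lt_Fin_ext.
    destruct (f y); auto. pose proof (Rmax_r r 0). lra.
  - assert (Hfx : ER_lt (Fin t) (ext (f x))).
    { apply ER_lt_Fin_ext. apply ER_lt_Fin_ext in Ht.
      destruct (f x); auto. unfold Rmax in Ht. destruct (Rle_dec r 0); lra. }
    destruct (Hlsc x t Hfx) as [d [Hd Hnear]]. exists d. split; [exact Hd|].
    intros y Hy. specialize (Hnear y Hy). apply ER_lt_Fin_ext in Hnear. apply ER_lt_Fin_ext.
    destruct (f y); auto. pose proof (Rmax_l r 0). lra.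
Qed.

Lemma slope_descent z fz mu d :
  f z = Some fz -> 0 <= mu -> 0 < d -> ER_lt (Fin mu) (slope f z) ->
  exists y fy, f y = Some fy /\ bs_norm (bs_sub y z) < d /\ fy + mu * bs_norm (bs_sub y z) < fz.
Proof.
  intros Hz Hmu Hd Hslope.
  destruct (ER_lt_sup _ _ Hslope) as [w [[h [Hh ->]] Hw]].
  apply ER_lt_opp_Fin in Hw.
  destruct (dir_deriv_spec f z h fz f_convex Hz) as [Hlim _].
  destruct (right_lim0_lt _ _ _ Hlim Hw) as [delta [Hdelta Hq]].
  set (t := Rmin (delta / 2) (d / 2)).
  assert (Ht : 0 < t < delta /\ t < d).
  { unfold t. repeat split; [apply Rmin_glb_lt; lra| |];
      eapply Rle_lt_trans; [apply Rmin_l|lra| apply Rmin_r|lra]. }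
  specialize (Hq t (proj1 Ht)). unfold diff_quot in Hq.
  destruct (f (bs_add z (bs_scal t h))) as [fy|] eqn:Hfy;
    [|rewrite ER_lt_nle in Hq; simpl in Hq; tauto].
  apply ER_lt_Fin in Hq.
  assert (Hstep : bs_norm (bs_sub (bs_add z (bs_scal t h)) z) <= t).
  { rewrite bs_add_sub_l, bs_norm_scal, Rabs_pos_eq by lra.
    pose proof (bs_norm_nonneg h). nra. }
  assert (Hdecr : fy - fz < - mu * t).
  { assert (Et : (fy - fz) / t * t = fy - fz) by (field; lra). nra. }
  exists (bs_add z (bs_scal t h)), fy. repeat split; [exact Hfy|lra|nra].
Qed.

Lemma sublevel_point_near mu x v :
  lsc f -> 0 < mu -> (forall y r, f y = Some r -> 0 < r -> ER_lt (Fin mu) (slope f y)) ->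
  f x = Some v -> 0 < v -> exists z, sublevel0 f z /\ mu * bs_norm (bs_sub x z) <= v.
Proof.
  intros Hlsc Hmu Hslope Hx Hv.
  assert (Hgx : pos_part x = Some v)
    by (unfold pos_part; rewrite Hx, Rmax_left by lra; reflexivity).
  destruct (ekeland_variational_principle pos_part mu Hmu pos_part_nonneg (pos_part_lsc Hlsc)
              x v Hgx) as (z & c & Hz & Hzx & Hmin).
  unfold pos_part in Hz. destruct (f z) as [fz|] eqn:Hfz; [|discriminate]. injection Hz as <-.
  destruct (Rle_lt_dec fz 0) as [Hneg|Hpos].
  - exists z. split; [exists fz; auto|]. rewrite Rmax_right in Hzx by lra.
    rewrite bs_norm_sub_sym. lra.
  - exfalso. rewrite Rmax_left in Hmin by lra.
    assert (Hradius : 0 < fz / mu) by (apply Rdiv_lt_0_compat; lra).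
    destruct (slope_descent z fz mu (fz / mu) Hfz (Rlt_le _ _ Hmu) Hradius (Hslope z fz Hfz Hpos))
      as (y & fy & Hfy & Hyz & Hdesc).
    assert (Hshort : mu * bs_norm (bs_sub y z) < fz).
    { apply Rlt_le_trans with (mu * (fz / mu)); [apply Rmult_lt_compat_l; lra|right; field; lra]. }
    assert (y = z) as ->.
    { apply (Hmin y (Rmax fy 0)); [unfold pos_part; rewrite Hfy; reflexivity|].
      unfold Rmax; destruct (Rle_dec fy 0); lra. }
    rewrite Hfz in Hfy. injection Hfy as ->. rewrite bs_norm_sub_diag in Hdesc. lra.
Qed.

Lemma error_bound_of_slope_ge mu :
  lsc f -> 0 < mu -> (forall x r, f x = Some r -> 0 < r -> ER_le (Fin mu) (slope f x)) ->
  error_bound_const f (/ mu).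
Proof.
  intros Hlsc Hmu Hslope. split; [left; apply Rinv_0_lt_compat; exact Hmu|].
  intros x. destruct (f x) as [v|] eqn:Hx; [|exact I].
  destruct (Rle_lt_dec v 0) as [Hv|Hv].
  - rewrite Rmax_right, Rmult_0_r by lra. rewrite <- (bs_norm_sub_diag x).
    apply dist_set_le. exists v. auto.
  - rewrite Rmax_left by lra. apply ER_le_Fin_eps. intros e He.
    (* [mu'] is chosen so that [v / mu' = v / mu + e]. *)
    assert (Hemu : 0 < e * mu) by (apply Rmult_lt_0_compat; lra).
    set (mu' := v * mu / (v + e * mu)).
    assert (Hmu'pos : 0 < mu') by (apply Rdiv_lt_0_compat; nra).
    assert (Hmu'lt : mu' < mu).
    { assert (mu - mu' = e * mu * mu / (v + e * mu)) by (unfold mu'; field; lra).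
      assert (0 < e * mu * mu / (v + e * mu)) by (apply Rdiv_lt_0_compat; nra). lra. }
    assert (Hslope' : forall y r, f y = Some r -> 0 < r -> ER_lt (Fin mu') (slope f y)).
    { intros y r Hy Hr. apply ER_lt_nle. intros Hle.
      pose proof (ER_le_trans _ _ _ (Hslope y r Hy Hr) Hle). simpl in *. lra. }
    destruct (sublevel_point_near mu' x v Hlsc Hmu'pos Hslope' Hx Hv) as (z & Hz & Hxz).
    eapply ER_le_trans; [apply (dist_set_le _ x z Hz)|]. simpl.
    apply (Rmult_le_reg_l mu'); [exact Hmu'pos|].
    replace (mu' * (/ mu * v + e)) with v by (unfold mu'; field; lra). exact Hxz.
Qed.

End Slope.

Theorem mainTheorem9 (X : BanachSpace) (f : X -> option R) :
  proper_fun f -> lsc f -> convex_fun f ->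
  (exists x, sublevel0 f x) ->
  ER_inv (K_f f) = slope_inf f.
Proof.
  intros _ Hlsc Hconv HS.
  apply ER_le_antisym.
  - apply ER_inf_spec. intros v (x & r & Hx & Hr & ->).
    exact (inv_K_f_le_slope f Hconv x r HS Hx Hr).
  - apply ER_le_of_pos_lower_bounds; [apply ER_inv_nonneg, K_f_nonneg|].
    intros mu Hmu Hinf. apply ER_Fin_le_inv; [exact Hmu|apply K_f_nonneg|].
    apply ER_inf_spec. exists (/ mu). split; [reflexivity|].
    apply (error_bound_of_slope_ge f Hconv mu Hlsc Hmu).
    intros x r Hx Hr. apply (ER_le_trans _ _ _ Hinf), ER_inf_spec. exists x, r. auto.
Qed.
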